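(* Let $\psi:(0,1]\to(0,\infty)$ with $\psi(1)=1$, $\lim_{r\to0+}\psi(r)=0$ and $I_\psi\subset(1,2)$, and let $f\in C^\psi(\mathbb{R}^d)$. Then there exists a constant $C=C(\psi)$ such that for every $i=1,\dots,d$, $$[D_if]_{C^{-1;\psi}}\le C\big(\|f\|_{C^0}+[[f]]_{C^\psi}\big).$$
   Context: $g:(0,1]\to(0,\infty)$ is almost increasing if $c\,g(r)\le g(R)$ for some $c\in(0,1]$ and all $0<r\le R\le1$, almost decreasing if $g(R)\le Cg(r)$ for some $C\ge1$ and all $0<r\le R\le1$. $M_\psi=\inf\{\alpha: \psi(r)/r^\alpha\text{ almost decreasing}\}$, $m_\psi=\sup\{\alpha: \psi(r)/r^\alpha\text{ almost increasing}\}$, $I_\psi=[m_\psi,M_\psi]$. $\|f\|_{C^0}=\sup|f|$; $D_if$ is the $i$-th partial derivative. $[g]_{C^{-1;\psi}}=\sup_x\sup_{0<|h|\le1}\frac{|g(x+h)-g(x)|}{\psi(|h|)|h|^{-1}}$; $[[f]]_{C^\psi}=\sup_x\sup_{0<|h|\le1}\frac{|f(x+h)-2f(x)+f(x-h)|}{\psi(|h|)}$. When $m_\psi\in(1,2]$, $C^\psi(\mathbb{R}^d)$ is the set of continuous $f$ with $f$ and all first partials bounded continuous and $[D_if]_{C^{-1;\psi}}<\infty$ for all $i$. *)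

From HB Require Import structures.
From mathcomp Require Import all_boot all_order all_algebra.
From mathcomp Require Import all_classical all_reals all_analysis.
Set Implicit Arguments. Unset Strict Implicit. Unset Printing Implicit Defensive.
Import Order.TTheory GRing.Theory Num.Theory.
Import numFieldNormedType.Exports.
Local Open Scope classical_set_scope.
Local Open Scope ring_scope.

Section Defs.
Variable R : realType.

Definition enorm (d : nat) (h : 'rV[R]_d) : R :=
  Num.sqrt (\sum_(j < d) h 0 j ^+ 2).

Definition evec (d : nat) (i : 'I_d) : 'rV[R]_d := delta_mx 0 i.

Definition partial (d : nat) (i : 'I_d) (f : 'rV[R]_d -> R) : 'rV[R]_d -> R :=
  fun x => derive f x (evec i).

Definition almost_increasing (g : R -> R) : Prop :=
  exists c : R, 0 < c <= 1 /\
    forall r s : R, 0 < r -> r <= s -> s <= 1 -> c * g r <= g s.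

Definition almost_decreasing (g : R -> R) : Prop :=
  exists C : R, 1 <= C /\
    forall r s : R, 0 < r -> r <= s -> s <= 1 -> g s <= C * g r.

(* M_psi = inf {a | psi(r)/r^a almost decreasing}, m_psi = sup {a | ... almost increasing},
   as extended reals (inf of empty set = +oo, sup of empty set = -oo). *)
Definition M_index (psi : R -> R) : \bar R :=
  ereal_inf [set (a%:E)%E | a in [set a : R | almost_decreasing (fun r => psi r / r `^ a)]].

Definition m_index (psi : R -> R) : \bar R :=
  ereal_sup [set (a%:E)%E | a in [set a : R | almost_increasing (fun r => psi r / r `^ a)]].

Definition I_index (psi : R -> R) : set R :=
  [set a : R | (m_index psi <= a%:E)%E /\ (a%:E <= M_index psi)%E].

Definition sup_norm (d : nat) (f : 'rV[R]_d -> R) : \bar R :=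
  ereal_sup [set (`|f x|%:E)%E | x in [set: 'rV[R]_d]].

Definition holder_m1 (psi : R -> R) (d : nat) (g : 'rV[R]_d -> R) : \bar R :=
  ereal_sup [set z : \bar R | exists x h : 'rV[R]_d,
     0 < enorm h <= 1 /\
     z = (`|g (x + h) - g x| / (psi (enorm h) / enorm h))%:E].

Definition holder2 (psi : R -> R) (d : nat) (f : 'rV[R]_d -> R) : \bar R :=
  ereal_sup [set z : \bar R | exists x h : 'rV[R]_d,
     0 < enorm h <= 1 /\
     z = (`|f (x + h) - 2 * f x + f (x - h)| / psi (enorm h))%:E].

(* C^psi(R^d) for m_psi in (1,2]: f continuous, f and all first partials
   bounded continuous, and [D_i f]_{C^{-1;psi}} < oo for all i. *)
Definition in_Cpsi (psi : R -> R) (d : nat) (f : 'rV[R]_d -> R) : Prop :=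
  continuous f /\ (exists M : R, forall x, `|f x| <= M) /\
  forall i : 'I_d,
    (forall x, derivable f x (evec i)) /\
    continuous (partial i f) /\
    (exists M : R, forall x, `|partial i f x| <= M) /\
    (holder_m1 psi (partial i f) < +oo)%E.

End Defs.

From mathcomp Require Import all_boot all_order all_algebra.
From mathcomp Require Import all_classical all_reals all_analysis.
From mathcomp Require Import ring lra.
Import Order.TTheory GRing.Theory Num.Theory.
Import numFieldNormedType.Exports.
Local Open Scope classical_set_scope.
Local Open Scope ring_scope.
Set Implicit Arguments. Unset Strict Implicit.

(* Since [I_psi] lies in [(1,2)] and [psi] vanishes at [0+], some [a > 1] makes
   [psi r / r ^ a] almost increasing, so with [rho = 2 ^ (1 - a) < 1] we get
   [psi (2^-m t) / (2^-m t) <= rho ^ m psi t / (c t)].  On a coordinate line, symmetric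
   difference quotients at the scales [t] and [2 t] differ by a second difference of [f],
   of size at most [[f]] psi(t) / t; summing the geometric series shows that [D_i f x] is
   within [O([[f]] psi t / t)] of the quotient at scale [t].  For [t = |h| / 2] the quotients
   at [x + h] and [x] differ by two second differences centred at [x + h / 2] with steps of
   length at most [|h|], which gives [|D_i f (x + h) - D_i f x| <= C [[f]] psi |h| / |h|]. *)

Section Indices.
Variables (R : realType) (psi : R -> R).
Hypothesis psi_gt0 : forall r, 0 < r <= 1 -> 0 < psi r.
Hypothesis psi1 : psi 1 = 1.

Lemma almost_increasing_le_almost_decreasing (a b : R) :
  almost_increasing (fun r => psi r / r `^ a) ->
  almost_decreasing (fun r => psi r / r `^ b) -> a <= b.
Proof.
move=> [c [/andP[c0 c1] aincr]] [C [C1 adecr]]; rewrite leNgt; apply/negP => ba.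
have C0 : 0 < C := lt_le_trans ltr01 C1.
(* Comparing [r] with [1]: [r ^ b <= C psi r <= (C / c) r ^ a]. *)
have key r : 0 < r -> r <= 1 -> 1 <= C / c * r `^ (a - b).
  move=> r0 r1; have pr : 0 < psi r by rewrite psi_gt0 // r0 r1.
  have rb_le : r `^ b <= C * psi r.
    have := adecr r 1 r0 r1 (lexx _).
    by rewrite psi1 powR1 divr1 mulrA ler_pdivlMr ?powR_gt0 // mul1r.
  have ra_ge : c * psi r <= r `^ a.
    have := aincr r 1 r0 r1 (lexx _).
    by rewrite psi1 powR1 divr1 mulrA ler_pdivrMr ?powR_gt0 // mul1r.
  have : r `^ b <= C / c * r `^ (a - b) * r `^ b.
    rewrite -mulrA -powRD ?(lt0r_neq0 r0) ?implybT // subrK.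
    apply: le_trans rb_le _; rewrite (_ : C * psi r = C / c * (c * psi r)).
      by apply: ler_wpM2l => //; rewrite divr_ge0 ?ltW.
    by field; rewrite lt0r_neq0.
  by rewrite -{1}[r `^ b]mul1r ler_pM2r ?powR_gt0.
set y := c / (2 * C); set r := y `^ (a - b)^-1.
have y0 : 0 < y by rewrite divr_gt0 // mulr_gt0.
have y1 : y <= 1 by rewrite ler_pdivrMr ?mulr_gt0 // mul1r; lra.
have r0 : 0 < r by rewrite powR_gt0.
have r1 : r <= 1.
  by rewrite -(powRr0 y) ger_powR ?y0 ?y1 // invr_ge0 subr_ge0 ltW.
have ryE : r `^ (a - b) = y.
  by rewrite -powRrM mulVf ?powRr1 ?ltW // subr_eq0 gt_eqF.
have := key r r0 r1; rewrite ryE (_ : C / c * y = 2^-1).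
  by rewrite invf_ge1 //; lra.
by rewrite /y; field; rewrite !lt0r_neq0.
Qed.

Lemma m_index_le_M_index : (m_index psi <= M_index psi)%E.
Proof.
apply: ge_ereal_sup => _ [a aincr <-]; apply/ereal_infP => _ [b adecr <-].
by rewrite lee_fin (almost_increasing_le_almost_decreasing aincr adecr).
Qed.

Hypothesis psi_cvg0 : psi r @[r --> 0^'+] --> 0.

(* An exponent [b < 0] in the defining set of [M_index psi] would bound [psi] below. *)
Lemma M_index_gtNy : (-oo < M_index psi)%E.
Proof.
rewrite ltNye; apply/eqP => /(lb_ereal_infNy_adherent 0) [_ [b [C [C1 adecr]] <-]].
rewrite lte_fin => b_lt0; have C0 : 0 < C := lt_le_trans ltr01 C1.
have psi_ge r : 0 < r -> r <= 1 -> C^-1 <= psi r.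
  move=> r0 r1; have := adecr r 1 r0 r1 (lexx _).
  rewrite psi1 powR1 divr1 mulrA ler_pdivlMr ?powR_gt0 // mul1r -ler_pdivrMl //.
  apply: le_trans; rewrite ler_pMr ?invr_gt0 //.
  by rewrite -(powRr0 r) ger_powR ?r0 ?r1 // ltW.
have Cinv_gt0 : 0 < C^-1 by rewrite invr_gt0.
have : \forall r \near 0^'+, [/\ 0 < r, r <= 1 & psi r < C^-1].
  near=> r; split; near: r; [exact: nbhs_right_gt | exact: nbhs_right_le |].
  exact: cvgr_lt _ psi_cvg0 _ Cinv_gt0.
by case/filter_ex => r [r0 r1]; rewrite ltNge psi_ge.
Unshelve. all: end_near.
Qed.

(* Otherwise [m_psi <= 1], and [min 1 M_psi] would lie in [I_psi]. *)
Lemma exists_almost_increasing_gt1 : I_index psi `<=` [set a : R | 1 < a < 2] ->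
  exists2 a, 1 < a & almost_increasing (fun r => psi r / r `^ a).
Proof.
move=> I_sub; apply: contrapT => no_aincr.
have m_le1 : (m_index psi <= 1%:E)%E.
  apply: ge_ereal_sup => _ [a aincr <-]; rewrite lee_fin leNgt.
  by apply/negP => a_gt1; apply: no_aincr; exists a.
suff [x x_le1 /I_sub/andP[x_gt1 _]] : exists2 x, x <= 1 & I_index psi x.
  by move: x_le1; rewrite leNgt x_gt1.
have := M_index_gtNy; case M_eq: (M_index psi) => [M | |] // _.
- have mM : (m_index psi <= M%:E)%E by rewrite -M_eq m_index_le_M_index.
  exists (Num.min 1 M); first by rewrite ge_min lexx.
  by split; rewrite EFin_min ?le_min ?m_le1 ?mM // M_eq ge_min lexx orbT.
- by exists 1 => //; split; rewrite ?M_eq ?leey.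
Qed.

End Indices.

Definition symdiffq (R : realType) (phi : R -> R) (s : R) : R :=
  (phi s - phi (- s)) / (2 * s).

Lemma symdiffq_dyadic_cvg (R : realType) (phi : R -> R) (L t : R) : 0 < t ->
  h^-1 * (phi h - phi 0) @[h --> 0^'] --> L ->
  symdiffq phi (t * 2^-1 ^+ n) @[n --> \oo] --> L.
Proof.
move=> t0 phi'L.
set u := fun n : nat => t * 2^-1 ^+ n.
have u_neq0 n : u n != 0 by rewrite mulf_neq0 ?lt0r_neq0 // expf_neq0 // invr_eq0.
have u_cvg0 : u n @[n --> \oo] --> 0.
  by apply: cvg_geometric; rewrite gtr0_norm ?invf_lt1 //; lra.
have Du : forall v : nat -> R, (forall n, v n != 0) -> v n @[n --> \oo] --> 0 ->
    (v n)^-1 * (phi (v n) - phi 0) @[n --> \oo] --> L.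
  move=> v v_neq0 v_cvg0.
  exact: (cvgr_dnbhsP (fun h => h^-1 * (phi h - phi 0)) 0 L).1 phi'L v (conj v_neq0 v_cvg0).
have uN_cvg0 : - u n @[n --> \oo] --> 0 by rewrite -oppr0; exact: cvgN.
have uN_neq0 n : - u n != 0 by rewrite oppr_eq0.
rewrite [X in _ --> X](_ : L = (L + L) * 2^-1); last by field.
apply: cvg_trans _ (cvgM (cvgD (Du u u_neq0 u_cvg0) (Du _ uN_neq0 uN_cvg0)) (cvg_cst _)).
by apply: near_eq_cvg; near=> n; rewrite /symdiffq /= fctE -/(u n); field; rewrite u_neq0.
Unshelve. all: end_near.
Qed.

Lemma dyadic_ratio_lt1 (R : realType) (a : R) : 1 < a -> (2^-1 : R) `^ (a - 1) < 1.
Proof.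
move=> a1; rewrite /powR (negbTE (_ : (2^-1 : R) != 0)); last by rewrite invr_eq0.
rewrite expR_lt1 pmulr_rlt0; last by lra.
by apply: ln_lt0; rewrite invr_gt0 /= invf_lt1 //; lra.
Qed.

Section AlmostIncreasingPow.
Variables (R : realType) (psi : R -> R) (a c : R).
Hypotheses (a_gt1 : 1 < a) (c_gt0 : 0 < c).
Let a_gt0 : 0 < a := lt_trans ltr01 a_gt1.
Hypothesis psi_gt0 : forall r, 0 < r <= 1 -> 0 < psi r.
Hypothesis psi_aincr : forall r s, 0 < r -> r <= s -> s <= 1 ->
  c * (psi r / r `^ a) <= psi s / s `^ a.

Lemma psi_le_div (r s : R) : 0 < r -> r <= s -> s <= 1 -> psi r <= psi s / c.
Proof.
move=> r0 rs s1; have s0 := lt_le_trans r0 rs.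
have ra0 : 0 < r `^ a by rewrite powR_gt0.
have sa0 : 0 < s `^ a by rewrite powR_gt0.
have ras : r `^ a <= s `^ a.
  by apply: ge0_ler_powR => //; rewrite ?nnegrE ltW.
have -> : psi r = c * (psi r / r `^ a) * (r `^ a / c) by field; rewrite !gt_eqF.
apply: le_trans (ler_wpM2r _ (psi_aincr r0 rs s1)) _; first by rewrite divr_ge0 ?ltW.
have -> : psi s / s `^ a * (r `^ a / c) = psi s / c * (r `^ a / s `^ a).
  by field; rewrite !gt_eqF.
apply: ler_piMr; last by rewrite ler_pdivrMr ?mul1r.
by rewrite divr_ge0 ?ltW // psi_gt0 // s0 s1.
Qed.

Lemma psi_div_le_pow (s t : R) : 0 < s -> s <= t -> t <= 1 ->
  psi s / s <= (s / t) `^ (a - 1) * (psi t / t) / c.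
Proof.
move=> s0 st t1; have t0 := lt_le_trans s0 st.
have q0 : 0 < s / t by rewrite divr_gt0.
have ta0 : 0 < t `^ a by rewrite powR_gt0.
have Es : s `^ a = (s / t) `^ (a - 1) * (s / t) * t `^ a.
  by rewrite [(s / t) `^ _ * _]mulrC mulr_powRB1 ?ltW // -powRM ?ltW // divfK ?lt0r_neq0.
have qa0 : 0 < (s / t) `^ (a - 1) by rewrite powR_gt0.
have -> : psi s / s = c * (psi s / s `^ a) * ((s / t) `^ (a - 1) * t `^ a / (c * t)).
  by rewrite Es; field; rewrite !lt0r_neq0.
apply: le_trans (ler_wpM2r _ (psi_aincr s0 st t1)) _.
  by rewrite divr_ge0 ?mulr_ge0 ?ltW.
have -> : psi t / t `^ a * ((s / t) `^ (a - 1) * t `^ a / (c * t))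
        = (s / t) `^ (a - 1) * (psi t / t) / c by field; rewrite !lt0r_neq0.
exact: lexx.
Qed.

Lemma psi_div_le_dyadic (t : R) (m : nat) : 0 < t -> t <= 1 ->
  psi (t * 2^-1 ^+ m) / (t * 2^-1 ^+ m)
    <= ((2^-1) `^ (a - 1)) ^+ m * (psi t / t) / c.
Proof.
move=> t0 t1; have q0 : (0 : R) < 2^-1 ^+ m by rewrite exprn_gt0 // invr_gt0.
have q1 : (2^-1 : R) ^+ m <= 1 by rewrite exprn_ile1 // ?invr_ge0 // invf_le1 //; lra.
apply: le_trans (psi_div_le_pow _ _ t1) _; rewrite ?mulr_gt0 ?ger_pMr //.
by rewrite [t * _ / t]mulrC mulKf ?lt0r_neq0 // -powR_mulrn ?invr_ge0 // powRAC powR_mulrn ?powR_ge0.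
Qed.

Section SecondDifference.
Variables (phi : R -> R) (H : R).
Hypothesis H_ge0 : 0 <= H.
Hypothesis phi_second_diff : forall s u, 0 < u -> u <= 1 ->
  `|phi (s + u) - 2 * phi s + phi (s - u)| <= H * psi u.
Let rho := (2^-1 : R) `^ (a - 1).

Lemma symdiffq_sub_double (s : R) : 0 < s -> s <= 1 ->
  `|symdiffq phi s - symdiffq phi (2 * s)| <= H / 2 * (psi s / s).
Proof.
move=> s0 s1.
have E : symdiffq phi s - symdiffq phi (2 * s) =
    ((phi (- s + s) - 2 * phi (- s) + phi (- s - s))
     - (phi (s + s) - 2 * phi s + phi (s - s))) / (4 * s).
  have -> : - s + s = s - s by lra.
  have -> : - s - s = - (2 * s) by lra.
  have -> : s + s = 2 * s by lra.
  by rewrite /symdiffq; field; lra.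
rewrite E normrM normfV (gtr0_norm (_ : 0 < 4 * s)) ?mulr_gt0 //.
rewrite ler_pdivrMr ?mulr_gt0 //.
apply: le_trans (ler_normB _ _) _.
apply: le_trans (lerD (phi_second_diff _ s0 s1) (phi_second_diff _ s0 s1)) _.
by rewrite le_eqVlt; apply/orP; left; apply/eqP; field; lra.
Qed.

Lemma symdiffq_dyadic_sub (t : R) (n : nat) : 0 < t -> t <= 1 ->
  `|symdiffq phi (t * 2^-1 ^+ n) - symdiffq phi t|
    <= H * rho / (2 * c * (1 - rho)) * (psi t / t) * (1 - rho ^+ n).
Proof.
move=> t0 t1; have rho_lt1 : rho < 1 := dyadic_ratio_lt1 a_gt1.
have rho_ge0 : 0 <= rho := powR_ge0 _ _.
elim: n => [|n IHn]; first by rewrite expr0 mulr1 subrr normr0 subrr mulr0.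
set s := t * 2^-1 ^+ n.+1.
have s0 : 0 < s by rewrite mulr_gt0 // exprn_gt0 // invr_gt0.
have s1 : s <= 1.
  apply: le_trans t1; rewrite ger_pMr // exprn_ile1 // ?invr_ge0 // invf_le1 //; lra.
have s2 : 2 * s = t * 2^-1 ^+ n by rewrite /s exprS; field.
rewrite -s2 in IHn.
have -> : symdiffq phi s - symdiffq phi t =
    (symdiffq phi s - symdiffq phi (2 * s)) + (symdiffq phi (2 * s) - symdiffq phi t).
  by ring.
apply: le_trans (ler_normD _ _) _.
apply: le_trans (lerD (symdiffq_sub_double s0 s1) IHn) _.
have -> : H * rho / (2 * c * (1 - rho)) * (psi t / t) * (1 - rho ^+ n.+1) =
    H / 2 * (rho ^+ n.+1 * (psi t / t) / c)
    + H * rho / (2 * c * (1 - rho)) * (psi t / t) * (1 - rho ^+ n).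
  by rewrite exprS; field; rewrite !lt0r_neq0 // subr_gt0.
rewrite lerD2r ler_wpM2l ?divr_ge0 //.
exact: psi_div_le_dyadic.
Qed.

Lemma deriv_sub_symdiffq_le (L t : R) : 0 < t -> t <= 1 ->
  h^-1 * (phi h - phi 0) @[h --> 0^'] --> L ->
  `|L - symdiffq phi t| <= H * rho / (2 * c * (1 - rho)) * (psi t / t).
Proof.
move=> t0 t1 phi'L.
have symdiffq_cvg : `|symdiffq phi (t * 2^-1 ^+ n) - symdiffq phi t| @[n --> \oo]
    --> `|L - symdiffq phi t|.
  exact: cvg_norm (cvgB (symdiffq_dyadic_cvg t0 phi'L) (cvg_cst _)).
apply: (cvgr_to_le symdiffq_cvg).
have rho_lt1 : rho < 1 := dyadic_ratio_lt1 a_gt1.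
have psit_ge0 : 0 <= psi t / t by rewrite divr_ge0 ?ltW // psi_gt0 // t0 t1.
have coef_ge0 : 0 <= H * rho / (2 * c * (1 - rho)).
  by rewrite divr_ge0 ?mulr_ge0 ?powR_ge0 // ?subr_ge0 ltW.
near=> n; apply: le_trans (symdiffq_dyadic_sub n t0 t1) _.
by apply: ler_piMr; [exact: mulr_ge0 | rewrite gerBl exprn_ge0 // powR_ge0].
Unshelve. all: end_near.
Qed.

End SecondDifference.

End AlmostIncreasingPow.

Section EuclideanNorm.
Variables (R : realType) (d : nat).
Implicit Types (v : 'rV[R]_d) (i : 'I_d).

Lemma enorm_ge0 v : 0 <= enorm v.
Proof. exact: sqrtr_ge0. Qed.

Lemma sqr_enorm v : enorm v ^+ 2 = \sum_(j < d) v 0 j ^+ 2.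
Proof. by rewrite sqr_sqrtr // sumr_ge0 // => j _; rewrite sqr_ge0. Qed.

Lemma enorm_eq0 v : enorm v = 0 -> v = 0.
Proof.
move=> /eqP; rewrite sqrtr_eq0 => sum_le0; apply/rowP => j; rewrite mxE.
have sum_eq0 : \sum_(k < d) v 0 k ^+ 2 = 0.
  by apply/eqP; rewrite eq_le sum_le0 sumr_ge0 // => k _; rewrite sqr_ge0.
apply/eqP; rewrite -sqrf_eq0; apply/eqP.
exact: (psumr_eq0P (fun k _ => sqr_ge0 (v 0 k)) sum_eq0).
Qed.

Lemma enormZ (b : R) v : enorm (b *: v) = `|b| * enorm v.
Proof.
rewrite /enorm (eq_bigr (fun j => b ^+ 2 * v 0 j ^+ 2)) => [|j _]; last first.
  by rewrite mxE exprMn.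
by rewrite -mulr_sumr sqrtrM ?sqr_ge0 // sqrtr_sqr.
Qed.

Lemma evecE i j : evec R i 0 j = (j == i)%:R.
Proof. by rewrite mxE eqxx. Qed.

Lemma enorm_evec i : enorm (evec R i) = 1.
Proof.
rewrite /enorm (bigD1 i) //= big1 => [|j /negbTE ji]; last by rewrite evecE ji expr0n.
by rewrite evecE eqxx expr1n addr0 sqrtr1.
Qed.

Lemma entry_le_enorm v i : `|v 0 i| <= enorm v.
Proof.
rewrite -sqrtr_sqr ler_sqrt; last by rewrite sumr_ge0 // => j _; rewrite sqr_ge0.
by rewrite (bigD1 i) //= lerDl sumr_ge0 // => j _; rewrite sqr_ge0.
Qed.

Lemma enorm_add_scale_evec_le v (b : R) i :
  enorm (v + b *: evec R i) <= enorm v + `|b|.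
Proof.
have sqrE : enorm (v + b *: evec R i) ^+ 2 = enorm v ^+ 2 + 2 * b * v 0 i + b ^+ 2.
  rewrite !sqr_enorm (bigD1 i) //= [in RHS](bigD1 i) //= !mxE !eqxx /= mulr1.
  rewrite (eq_bigr (fun j => v 0 j ^+ 2)) => [|j /negbTE ji].
    by ring.
  by rewrite !mxE ji mulr0 addr0.
have cross : b * v 0 i <= `|b| * enorm v.
  by apply: le_trans (ler_norm _) _; rewrite normrM ler_wpM2l ?entry_le_enorm.
have sqr_b : `|b| ^+ 2 = b ^+ 2 by rewrite -normrX ger0_norm ?sqr_ge0.
rewrite -ler_sqr ?nnegrE ?addr_ge0 ?enorm_ge0 // sqrE sqrrD sqr_b.
nra.
Qed.

End EuclideanNorm.

Section CoordinateIncrement.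
Variables (R : realType) (d : nat) (psi : R -> R) (a c H : R).
Variables (f : 'rV[R]_d -> R) (i : 'I_d).
Hypotheses (a_gt1 : 1 < a) (c_gt0 : 0 < c).
Hypothesis psi_gt0 : forall r, 0 < r <= 1 -> 0 < psi r.
Hypothesis psi_aincr : forall r s, 0 < r -> r <= s -> s <= 1 ->
  c * (psi r / r `^ a) <= psi s / s `^ a.
Hypothesis f_derivable : forall x, derivable f x (evec R i).
Hypothesis f_second_diff : forall x h : 'rV[R]_d, 0 < enorm h <= 1 ->
  `|f (x + h) - 2 * f x + f (x - h)| <= H * psi (enorm h).
Let e := evec R i.
Let rho := (2^-1 : R) `^ (a - 1).

Let H_ge0 : 0 <= H.
Proof.
have e_le1 : 0 < enorm e <= 1 by rewrite enorm_evec ltr01 lexx.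
have := le_trans (normr_ge0 _) (f_second_diff 0 e_le1).
by rewrite enorm_evec pmulr_lge0 // psi_gt0 // ltr01 lexx.
Qed.

Lemma f_second_diff_le (p w : 'rV[R]_d) (r : R) : 0 < r -> r <= 1 -> enorm w <= r ->
  `|f (p + w) - 2 * f p + f (p - w)| <= H * (psi r / c).
Proof.
move=> r0 r1 wr; have [/enorm_eq0 -> | w_neq0] := eqVneq (enorm w) 0.
  rewrite addr0 subr0 (_ : f p - 2 * f p + f p = 0) ?normr0; last by ring.
  by rewrite mulr_ge0 // divr_ge0 ?ltW // psi_gt0 // r0 r1.
have w0 : 0 < enorm w by rewrite lt0r w_neq0 enorm_ge0.
apply: le_trans (f_second_diff p _) _; first by rewrite w0 (le_trans wr r1).
by rewrite ler_wpM2l // (psi_le_div a_gt1 c_gt0 psi_gt0 psi_aincr).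
Qed.

Lemma partial_sub_symdiffq_le (y : 'rV[R]_d) (t : R) : 0 < t -> t <= 1 ->
  `|partial i f y - symdiffq (fun s => f (s *: e + y)) t|
    <= H * rho / (2 * c * (1 - rho)) * (psi t / t).
Proof.
move=> t0 t1; apply: deriv_sub_symdiffq_le => //.
- move=> s u u0 u1.
  rewrite scalerDl scalerBl [s *: e + u *: e + y]addrAC [s *: e - u *: e + y]addrAC.
  have u_le1 : 0 < enorm (u *: e) <= 1 by rewrite enormZ enorm_evec mulr1 gtr0_norm ?u0.
  have D2 := f_second_diff (s *: e + y) u_le1.
  by rewrite enormZ enorm_evec mulr1 (gtr0_norm u0) in D2.
- by rewrite /= scale0r add0r; exact: f_derivable.
Qed.

(* With [p = x + h / 2] and [w = h / 2 + t e], [w' = - h / 2 + t e], the difference of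
   the symmetric quotients at [x + h] and [x] is [(D2_w f p - D2_w' f p) / |h|]. *)
Lemma symdiffq_increment_le (x h : 'rV[R]_d) : 0 < enorm h -> enorm h <= 1 ->
  `|symdiffq (fun s => f (s *: e + (x + h))) (enorm h / 2)
    - symdiffq (fun s => f (s *: e + x)) (enorm h / 2)|
    <= 2 * (H * (psi (enorm h) / c)) / enorm h.
Proof.
move=> N0 N1; set N := enorm h in N0 N1 *; set t := N / 2.
set p := x + 2^-1 *: h; set w := 2^-1 *: h + t *: e; set w' := - 2^-1 *: h + t *: e.
have half_le (u : R) : `|u| = 2^-1 -> enorm (u *: h + t *: e) <= N.
  move=> u_half; apply: le_trans (enorm_add_scale_evec_le _ _ _) _.
  by rewrite enormZ u_half -/N gtr0_norm ?divr_gt0 // /t; lra.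
have E : symdiffq (fun s => f (s *: e + (x + h))) t - symdiffq (fun s => f (s *: e + x)) t
    = ((f (p + w) - 2 * f p + f (p - w)) - (f (p + w') - 2 * f p + f (p - w'))) / N.
  have -> : p + w = t *: e + (x + h) by apply/rowP => j; rewrite !mxE /t; field.
  have -> : p - w = - t *: e + x by apply/rowP => j; rewrite !mxE /t; field.
  have -> : p + w' = t *: e + x by apply/rowP => j; rewrite !mxE /t; field.
  have -> : p - w' = - t *: e + (x + h) by apply/rowP => j; rewrite !mxE /t; field.
  by rewrite /symdiffq /t; field; rewrite lt0r_neq0.
rewrite E normrM normfV (gtr0_norm N0) ler_pM2r ?invr_gt0 //.
apply: le_trans (ler_normB _ _) _; rewrite [2 * (H * _)]mulr_natl mulr2n.
apply: lerD; apply: f_second_diff_le => //; apply: half_le.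
  by rewrite gtr0_norm ?invr_gt0.
by rewrite normrN gtr0_norm ?invr_gt0.
Qed.

Lemma partial_increment_le (x h : 'rV[R]_d) : 0 < enorm h -> enorm h <= 1 ->
  `|partial i f (x + h) - partial i f x|
    <= (rho ^+ 2 / (c ^+ 2 * (1 - rho)) + 2 / c) * H * (psi (enorm h) / enorm h).
Proof.
move=> N0 N1; set N := enorm h in N0 N1 *; set t := N / 2.
have rho_lt1 : rho < 1 := dyadic_ratio_lt1 a_gt1.
have t0 : 0 < t by rewrite divr_gt0.
have t1 : t <= 1 by rewrite /t; lra.
have psi_t : psi t / t <= rho * (psi N / N) / c.
  by have := psi_div_le_dyadic a_gt1 c_gt0 psi_aincr 1 N0 N1; rewrite expr1.
have quot_le (y : 'rV[R]_d) : `|partial i f y - symdiffq (fun s => f (s *: e + y)) t|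
    <= H * rho ^+ 2 / (2 * c ^+ 2 * (1 - rho)) * (psi N / N).
  apply: le_trans (partial_sub_symdiffq_le y t0 t1) _.
  rewrite (_ : H * rho ^+ 2 / _ * _ = H * rho / (2 * c * (1 - rho)) * (rho * (psi N / N) / c)).
    by apply: ler_wpM2l psi_t; rewrite divr_ge0 ?mulr_ge0 ?powR_ge0 // ?subr_ge0 ltW.
  by field; rewrite !lt0r_neq0 // subr_gt0.
have -> : partial i f (x + h) - partial i f x =
    (partial i f (x + h) - symdiffq (fun s => f (s *: e + (x + h))) t)
    - (partial i f x - symdiffq (fun s => f (s *: e + x)) t)
    + (symdiffq (fun s => f (s *: e + (x + h))) t - symdiffq (fun s => f (s *: e + x)) t).
  by ring.
apply: le_trans (ler_normD _ _) _.
apply: le_trans (lerD (ler_normB _ _) (symdiffq_increment_le x N0 N1)) _.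
apply: le_trans (lerD (lerD (quot_le _) (quot_le _)) (lexx _)) _.
by rewrite -/N le_eqVlt; apply/orP; left; apply/eqP; field; rewrite !lt0r_neq0 // subr_gt0.
Qed.

End CoordinateIncrement.

Section Seminorms.
Variables (R : realType) (d : nat) (psi : R -> R).
Hypothesis psi_gt0 : forall r, 0 < r <= 1 -> 0 < psi r.

Lemma sup_norm_ge0 (f : 'rV[R]_d -> R) : (0 <= sup_norm f)%E.
Proof.
apply: le_trans (ereal_sup_ubound _); last by exists 0.
by rewrite lee_fin normr_ge0.
Qed.

Lemma holder2_gtNy (f : 'rV[R]_d -> R) (i : 'I_d) : (-oo < holder2 psi f)%E.
Proof.
apply: lt_le_trans (ereal_sup_ubound _); last first.
  by exists 0, (evec R i); split; rewrite ?enorm_evec ?ltr01 ?lexx.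
exact: ltNyr.
Qed.

Lemma holder2_second_diff_le (f : 'rV[R]_d -> R) (H : R) : holder2 psi f = H%:E ->
  forall x h : 'rV[R]_d, 0 < enorm h <= 1 ->
  `|f (x + h) - 2 * f x + f (x - h)| <= H * psi (enorm h).
Proof.
move=> H_eq x h h_le1.
have : ((`|f (x + h) - 2 * f x + f (x - h)| / psi (enorm h))%:E <= holder2 psi f)%E.
  by apply: ereal_sup_ubound; exists x, h.
by rewrite H_eq lee_fin ler_pdivrMr // psi_gt0.
Qed.

Lemma holder_m1_le (g : 'rV[R]_d -> R) (M : R) :
  (forall x h : 'rV[R]_d, 0 < enorm h -> enorm h <= 1 ->
    `|g (x + h) - g x| <= M * (psi (enorm h) / enorm h)) ->
  (holder_m1 psi g <= M%:E)%E.
Proof.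
move=> g_incr; apply: ge_ereal_sup => _ [x [h [/andP[h0 h1] ->]]].
by rewrite lee_fin ler_pdivrMr ?divr_gt0 ?psi_gt0 ?h0 ?g_incr.
Qed.

End Seminorms.

Theorem lemma2p4 (R : realType) (d : nat) (psi : R -> R) :
  (forall r : R, 0 < r <= 1 -> 0 < psi r) ->
  psi 1 = 1 ->
  psi r @[r --> 0^'+] --> 0 ->
  I_index psi `<=` [set a : R | 1 < a < 2] ->
  exists C : R, forall f : 'rV[R]_d -> R,
    in_Cpsi psi f ->
    forall i : 'I_d,
      (holder_m1 psi (partial i f) <= C%:E * (sup_norm f + holder2 psi f))%E.
Proof.
move=> psi_gt0 psi1 psi_cvg0 I_sub.
have [a a_gt1 [c [/andP[c_gt0 _] psi_aincr]]] :=
  exists_almost_increasing_gt1 psi_gt0 psi1 psi_cvg0 I_sub.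
set rho := (2^-1 : R) `^ (a - 1); have rho_lt1 : rho < 1 := dyadic_ratio_lt1 a_gt1.
set K := rho ^+ 2 / (c ^+ 2 * (1 - rho)) + 2 / c.
have K_gt0 : 0 < K.
  apply: ltr_wpDl; last by rewrite divr_gt0.
  by rewrite divr_ge0 ?sqr_ge0 // mulr_ge0 ?sqr_ge0 // subr_ge0 ltW.
exists K => f [_ [_ f_partial]] i.
have f_derivable x : derivable f x (evec R i) by case: (f_partial i).
case H_eq : (holder2 psi f) => [H | |].
- apply: (@le_trans _ _ (K * H)%:E).
    apply: holder_m1_le => // x h h0 h1.
    exact: (partial_increment_le a_gt1 c_gt0 psi_gt0 psi_aincr f_derivable
      (holder2_second_diff_le psi_gt0 H_eq)).
  rewrite EFinM; apply: lee_wpmul2l; first by rewrite lee_fin ltW.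
  exact: leeDr (sup_norm_ge0 _).
- rewrite addey; last by apply: contra_eqN (sup_norm_ge0 f) => /eqP ->.
  by rewrite muleC gt0_mulye ?lte_fin // leey.
- by have := holder2_gtNy psi f i; rewrite H_eq.
Qed.
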